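(* Let $n\in\mathbb N$. (a) If $a_{\mathbf P}:(0,\infty)\to\mathbb R$, $\mathbf P\in\mathbf{Part}(n)$, are functions such that $\sum_{\mathbf P\in\mathbf{Part}(n)}a_{\mathbf P}(\|\mu\|)(\tau^{\mathbf P}_I)_\mu=0$ for all finite sets $I$ and all $\mu\in\mathcal M_+(I)$, then $a_{\mathbf P}\equiv0$ for all $\mathbf P$. (b) If $c_{\mathbf P}\in\mathbb R$, for $\mathbf P=\{P_1,\dots,P_l\}\in\mathbf{Part}(n)$ with $|P_i|\ge2$ for all $i$, are constants such that $\sum_{\mathbf P}c_{\mathbf P}\tau^{\mathbf P}_I=0$ when restricted to $\mathcal P_+(I)$ (i.e. at points of $\mathcal P_+(I)$ and on tangent vectors in $\mathcal S_0(I)$) for all finite sets $I$, then $c_{\mathbf P}=0$ for all $\mathbf P$. In other words, the functions $a_{\mathbf P}$ and the constants $c_{\mathbf P}$ in such representations are uniquely determined.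
   Context: $\mathbf{Part}(n)$ is the set of partitions of $\{1,\dots,n\}$. For a finite set $I$: $\mathcal S(I)=\{\sum_{i\in I}x_i\delta_i\}$, $\|\sum x_i\delta_i\|=\sum|x_i|$, $\mathcal M_+(I)=\{\sum\mu_i\delta_i:\mu_i>0\}$, $\mathcal P_+(I)=\{\mu\in\mathcal M_+(I):\sum\mu_i=1\}$, $\mathcal S_0(I)=\{\sum x_i\delta_i:\sum x_i=0\}$. For $\mu=\sum\mu_i\delta_i\in\mathcal M_+(I)$ and $V_k=\sum_iV^i_k\delta_i\in\mathcal S(I)$, $(\tau^m_I)_\mu(V_1,\dots,V_m)=\sum_i\mu_i^{1-m}V_1^i\cdots V_m^i$, and for $\mathbf P=\{P_1,\dots,P_l\}\in\mathbf{Part}(n)$, $(\tau^{\mathbf P}_I)_\mu(V_1,\dots,V_n)=\prod_{i=1}^l(\tau^{|P_i|}_I)_\mu((V_j)_{j\in P_i})$. *)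

From HB Require Import structures.
From mathcomp Require Import all_boot all_order all_algebra.
From mathcomp Require Import reals.
Set Implicit Arguments. Unset Strict Implicit. Unset Printing Implicit Defensive.
Import Order.TTheory GRing.Theory Num.Theory.
Local Open Scope ring_scope.

Definition is_part (n : nat) (P : {set {set 'I_n}}) : bool :=
  partition P [set: 'I_n].

Definition is_part_ge2 (n : nat) (P : {set {set 'I_n}}) : bool :=
  is_part P && [forall B in P, 1 < #|B|]%N.

Definition snorm (R : realType) (I : finType) (mu : I -> R) : R :=
  \sum_(i : I) `|mu i|.

Definition tau_m (R : realType) (I : finType) (n : nat) (B : {set 'I_n})
    (mu : I -> R) (V : 'I_n -> I -> R) : R :=
  \sum_(i : I) mu i ^ (1 - (#|B|)%:Z) * \prod_(j in B) V j i.

Definition tauP (R : realType) (I : finType) (n : nat) (P : {set {set 'I_n}})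
    (mu : I -> R) (V : 'I_n -> I -> R) : R :=
  \prod_(B in P) tau_m B mu V.

From HB Require Import structures.
From mathcomp Require Import all_boot all_order all_algebra.
From mathcomp Require Import reals.
From mathcomp Require Import lra.
Import Order.TTheory GRing.Theory Num.Theory.
Set Implicit Arguments. Unset Strict Implicit.
Local Open Scope ring_scope.

(* Test both identities on the index set K * {set 'I_n} with constant weight w and,
   for each partition Q, the vectors V_j (b, S) = v_b [S = block of Q containing j].
   Then tauP P (V) is the product over the blocks B of P of
   w^(1-|B|) * (sum_b v_b^|B|) * [B lies in a single block of Q], which vanishes
   unless P refines Q and does not vanish for P = Q as long as these power sums are
   nonzero.  The linear system indexed by Q is therefore triangular for refinement,
   so all coefficients vanish.  For (a) take v = (1).  In (b) the V_j must sum to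
   zero, so take v = (2, -1, -1): its power sums 2^k + 2(-1)^k vanish only for
   k = 1, the block size excluded in (b). *)

Lemma triangular_eq0 (R : idomainType) (T : finType) (F : pred T)
    (rank : T -> nat) (M : T -> T -> R) (x : T -> R) :
  (forall Q, F Q -> \sum_(P | F P) x P * M Q P = 0) ->
  (forall Q P, F Q -> F P -> P != Q -> M Q P != 0 -> (rank P < rank Q)%N) ->
  (forall Q, F Q -> M Q Q != 0) ->
  forall Q, F Q -> x Q = 0.
Proof.
move=> hsum hlower hdiag Q; have [k] := ubnP (rank Q).
elim: k Q => // k IH Q ltQk FQ.
have /eqP := hsum Q FQ; rewrite (bigD1 Q) //= big1 ?addr0.
  by rewrite mulf_eq0 (negbTE (hdiag Q FQ)) orbF => /eqP.
move=> P /andP[FP neqPQ]; have [->|nzM] := eqVneq (M Q P) 0; first by rewrite mulr0.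
by rewrite IH ?mul0r // (leq_trans (hlower _ _ FQ FP neqPQ nzM)).
Qed.

Section Refinement.
Variable T : finType.
Implicit Types P Q : {set {set T}}.

Definition same_block P := [set p : T * T | pblock P p.1 == pblock P p.2].

Definition refines P Q := same_block P \subset same_block Q.

Lemma same_block_inj P Q : partition P [set: T] -> partition Q [set: T] ->
  same_block P = same_block Q -> P = Q.
Proof.
move=> hP hQ eqPQ; rewrite -(preim_partition_pblock hP) -(preim_partition_pblock hQ).
apply: eq_imset => x; apply/setP => y; rewrite !inE /=.
by have /setP/(_ (x, y)) := eqPQ; rewrite !inE.
Qed.

Lemma refines_card_lt P Q : partition P [set: T] -> partition Q [set: T] ->
  refines P Q -> P != Q -> (#|same_block P| < #|same_block Q|)%N.
Proof.
move=> hP hQ PQ neqPQ; apply: proper_card; rewrite properEneq [_ \subset _]PQ andbT.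
by apply: contra neqPQ => /eqP/(same_block_inj hP hQ)->.
Qed.

Lemma refines_pblock P Q : partition P [set: T] ->
  (forall B x y, B \in P -> x \in B -> y \in B -> pblock Q x = pblock Q y) ->
  refines P Q.
Proof.
move=> hP hblock; have [/eqP covP _ _] := and3P hP.
have memP z : z \in pblock P z by rewrite mem_pblock covP inE.
apply/subsetP => -[x y]; rewrite !inE /= => /eqP eqxy.
apply/eqP/(hblock (pblock P x)); rewrite ?memP ?eqxy //.
by rewrite pblock_mem // covP inE.
Qed.

End Refinement.

Lemma sum_prod_eq_indicator (R : comPzSemiRingType) (J S : finType) (f : J -> S)
    (B : {set J}) j0 : j0 \in B ->
  \sum_(s : S) \prod_(j in B) (s == f j)%:R = [forall j in B, f j == f j0]%:R :> R.
Proof.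
move=> j0B; rewrite (bigD1 (f j0)) //= [X in _ + X]big1 ?addr0 => [|s neq_s]; last first.
  by rewrite (bigD1 j0) //= (negbTE neq_s) mul0r.
have [eq_f|/forall_inPn[j jB neq_j]] := boolP [forall j in B, f j == f j0].
  by apply: big1 => j jB; rewrite eq_sym (eqP (forall_inP eq_f j jB)) eqxx.
by rewrite (bigD1 j) //= eq_sym (negbTE neq_j) mul0r.
Qed.

Lemma sum_const_avg (R : numFieldType) (I : finType) (i0 : I) (t : R) :
  \sum_(i : I) t / #|I|%:R = t.
Proof.
have cardI_gt0 : (0 < #|I|)%N by apply/card_gt0P; exists i0.
by rewrite sumr_const -[_ *+ _]mulr_natr divfK // pnatr_eq0 -lt0n.
Qed.

Section TestVectors.
Variables (R : realType) (n : nat) (K : finType) (v : K -> R).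
Implicit Types P Q : {set {set 'I_n}}.
Local Notation I := (K * {set 'I_n})%type.

Definition test_vec Q : 'I_n -> I -> R := fun j i => v i.1 * (i.2 == pblock Q j)%:R.

Definition power_sum k := \sum_b v b ^+ k.

Lemma sum_test_vec Q j : \sum_(i : I) test_vec Q j i = \sum_b v b.
Proof.
rewrite -(pair_bigA _ (fun b S => v b * (S == pblock Q j)%:R)) /=.
apply: eq_bigr => b _; rewrite -mulr_sumr (bigD1 (pblock Q j)) //= eqxx big1 ?addr0 ?mulr1 //.
by move=> S /negbTE ->.
Qed.

Lemma tau_m_test_vec (w : R) Q (B : {set 'I_n}) j0 : j0 \in B ->
  tau_m B (fun _ : I => w) (test_vec Q) =
  w ^ (1 - #|B|%:Z) * power_sum #|B| * [forall j in B, pblock Q j == pblock Q j0]%:R.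
Proof.
move=> j0B; rewrite -(sum_prod_eq_indicator _ _ j0B) /tau_m.
rewrite -(pair_bigA _ (fun b S => w ^ (1 - #|B|%:Z) * \prod_(j in B) test_vec Q j (b, S))) /=.
rewrite -mulrA mulr_suml mulr_sumr; apply: eq_bigr => b _.
rewrite !mulr_sumr; apply: eq_bigr => S _.
by rewrite /test_vec /= big_split /= prodr_const.
Qed.

Lemma tauP_test_vec_refines w P Q : is_part P ->
  tauP P (fun _ : I => w) (test_vec Q) != 0 -> refines P Q.
Proof.
move=> hP /prodf_neq0 nz; apply: refines_pblock hP _ => B x y BP xB yB.
have := nz B BP; rewrite (tau_m_test_vec _ _ xB) mulf_eq0 negb_or => /andP[_].
by rewrite pnatr_eq0 eqb0 negbK => /forall_inP/(_ y yB)/eqP.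
Qed.

Lemma tauP_test_vec_diag_neq0 w Q : is_part Q -> w != 0 ->
  (forall B, B \in Q -> power_sum #|B| != 0) ->
  tauP Q (fun _ : I => w) (test_vec Q) != 0.
Proof.
move=> hQ w_neq0 hpow; have [_ trivQ _] := and3P hQ.
apply/prodf_neq0 => B BQ; have /set0Pn[j0 j0B] := partition_neq0 hQ BQ.
rewrite (tau_m_test_vec _ _ j0B) !mulf_neq0 ?expfz_neq0 ?hpow //.
rewrite pnatr_eq0 eqb0 negbK; apply/forall_inP => j jB.
by rewrite (def_pblock trivQ BQ jB) (def_pblock trivQ BQ j0B).
Qed.

Lemma tauP_coef_eq0 (F : pred {set {set 'I_n}}) (x : {set {set 'I_n}} -> R) w :
  w != 0 -> (forall P, F P -> is_part P) ->
  (forall P B, F P -> B \in P -> power_sum #|B| != 0) ->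
  (forall Q, F Q -> \sum_(P | F P) x P * tauP P (fun _ : I => w) (test_vec Q) = 0) ->
  forall P, F P -> x P = 0.
Proof.
move=> w_neq0 hF hpow hsum.
apply: (triangular_eq0 (rank := fun P => #|same_block P|) hsum).
  move=> Q P FQ FP neqPQ nz.
  apply: refines_card_lt (hF P FP) (hF Q FQ) _ neqPQ.
  exact: tauP_test_vec_refines (hF P FP) nz.
by move=> Q FQ; apply: tauP_test_vec_diag_neq0; rewrite ?hF // => B; apply: hpow.
Qed.

End TestVectors.

Lemma pow2_add_sign_gt0 (R : realDomainType) k : (1 < k)%N ->
  0 < 2 ^+ k + 2 * (-1) ^+ k :> R.
Proof.
move=> k_gt1; have : 2 ^+ 2 <= 2 ^+ k :> R by rewrite ler_eXn2l // ltr1n.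
have : -1 <= (-1) ^+ k :> R by rewrite -signr_odd; case: odd; rewrite ?expr0 ?expr1 //; lra.
rewrite expr2; lra.
Qed.

Lemma tauP_fun_coef_eq0 (R : realType) (n : nat) (a : {set {set 'I_n}} -> R -> R) :
  (forall (I : finType) (mu : I -> R), (forall i, 0 < mu i) ->
     forall V : 'I_n -> I -> R,
     \sum_(P | is_part P) a P (snorm mu) * tauP P mu V = 0) ->
  forall P, is_part P -> forall t : R, 0 < t -> a P t = 0.
Proof.
move=> ha P hP t t_gt0; pose w := t / #|{: 'I_1 * {set 'I_n}}|%:R.
have w_gt0 : 0 < w by rewrite divr_gt0 // ltr0n; apply/card_gt0P; exists (ord0, set0).
apply: (tauP_coef_eq0 (F := @is_part n) (v := fun _ : 'I_1 => 1) (w := w)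
  (x := fun P => a P t)) hP => //.
- by rewrite gt_eqF.
- by move=> P' B _ _; rewrite /power_sum big_ord1 expr1n oner_neq0.
move=> Q _; have := ha _ (fun _ : 'I_1 * {set 'I_n} => w) (fun _ => w_gt0).
suff -> : snorm (fun _ : 'I_1 * {set 'I_n} => w) = t by apply.
rewrite /snorm -[RHS](sum_const_avg (I := ('I_1 * {set 'I_n})%type) (ord0, set0)).
by apply: eq_bigr => i _; apply: gtr0_norm.
Qed.

Lemma tauP_simplex_coef_eq0 (R : realType) (n : nat) (c : {set {set 'I_n}} -> R) :
  (forall (I : finType) (mu : I -> R), (forall i, 0 < mu i) ->
     \sum_(i : I) mu i = 1 ->
     forall V : 'I_n -> I -> R, (forall j, \sum_(i : I) V j i = 0) ->
     \sum_(P | is_part_ge2 P) c P * tauP P mu V = 0) ->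
  forall P, is_part_ge2 P -> c P = 0.
Proof.
move=> hc P hP; pose v (b : 'I_3) : R := if b == ord0 then 2 else -1.
have power_sum_v k : power_sum v k = 2 ^+ k + 2 * (-1) ^+ k.
  by rewrite /power_sum !big_ord_recl big_ord0 /= addr0 mulr2n mulrDl mul1r addrA.
pose w : R := 1 / #|{: 'I_3 * {set 'I_n}}|%:R.
have w_gt0 : 0 < w by rewrite divr_gt0 // ltr0n; apply/card_gt0P; exists (ord0, set0).
apply: (tauP_coef_eq0 (F := @is_part_ge2 n) (v := v) (w := w) (x := c)) hP => //.
- by rewrite gt_eqF.
- by move=> P' /andP[].
- move=> P' B /andP[_ /forall_inP blocks_ge2] BP'.
  by rewrite power_sum_v lt0r_neq0 // pow2_add_sign_gt0 // blocks_ge2.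
move=> Q _; apply: hc => [_ | | j]; first exact: w_gt0.
  exact: (sum_const_avg (I := ('I_3 * {set 'I_n})%type) (ord0, set0)).
by rewrite sum_test_vec !big_ord_recl big_ord0 /v /=; lra.
Qed.

Theorem lemma4p2 (R : realType) (n : nat) :
  (* (a) *)
  (forall a : {set {set 'I_n}} -> R -> R,
    (forall (I : finType) (mu : I -> R), (forall i, 0 < mu i) ->
       forall V : 'I_n -> I -> R,
       \sum_(P | is_part P) a P (snorm mu) * tauP P mu V = 0) ->
    forall P, is_part P -> forall t : R, 0 < t -> a P t = 0)
  /\
  (* (b) *)
  (forall c : {set {set 'I_n}} -> R,
    (forall (I : finType) (mu : I -> R), (forall i, 0 < mu i) ->
       \sum_(i : I) mu i = 1 ->
       forall V : 'I_n -> I -> R, (forall j, \sum_(i : I) V j i = 0) ->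
       \sum_(P | is_part_ge2 P) c P * tauP P mu V = 0) ->
    forall P, is_part_ge2 P -> c P = 0).
Proof. by split; [apply: tauP_fun_coef_eq0 | apply: tauP_simplex_coef_eq0]. Qed.
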